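(* Let $1\le k\le n$ and $S\in\{n\ k\}$. The restriction of $\mathsf{Rot}_S$ to the boundary $[0,\pi]^{Z_S}\setminus(0,\pi)^{Z_S}$ takes values in $\bigcup_{T<S}\mathsf{Gr}_k(n)_T$.
   Context: $\mathsf{Gr}_k(n)$ is the real Grassmannian of $k$-dimensional subspaces of $\mathbb{R}^n$, with the quotient topology from the map $\mathsf{col}$ sending an injective $n\times k$ matrix to its column space. $\{n\ k\}$ is the set of $k$-element subsets $S=\{s_1<\cdots<s_k\}$ of $\{1,\dots,n\}$, partially ordered by $S\le T$ iff $s_i\le t_i$ for all $i$. For $S$, let $\mathbb{R}^S=\mathrm{span}\{e_i: i\in S\}$, and $U_S$ the set of $V\in\mathsf{Gr}_k(n)$ whose orthogonal projection to $\mathbb{R}^S$ is an isomorphism. The Schubert cell is $\mathsf{Gr}_k(n)_S:=\{V\mid S \text{ is the maximum of }\{T: V\in U_T\}\}$. Let $Z_S:=\{(i,j)\mid 1\le i\le k,\ i\le j\le s_i-1\}$, totally ordered by $(i,j)\le(i',j')$ iff $i<i'$, or $i=i'$ and $j\ge j'$. $\mathsf{R}_j(\theta)\in O(n)$ is the rotation by $\theta$ in the oriented $(e_j,e_{j+1})$-plane. $\mathsf{Rot}_S:[0,\pi]^{Z_S}\to\mathsf{Gr}_k(n)$ is $(\theta_{(i,j)})\mapsto \mathsf{col}\bigl((\prod_{(i,j)\in Z_S}\mathsf{R}_j(\theta_{(i,j)}))\,\mathbb{1}_{n\times k}\bigr)$, product from left to right in increasing order of $Z_S$, $\mathbb{1}_{n\times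 k}$ the first $k$ columns of the identity. *)

From HB Require Import structures.
From mathcomp Require Import all_boot all_order all_algebra.
From mathcomp Require Import reals trigo.
Set Implicit Arguments. Unset Strict Implicit. Unset Printing Implicit Defensive.
Import Order.TTheory GRing.Theory Num.Theory.
Local Open Scope ring_scope.

(* Indices are 0-based: the paper's {1..n} is 'I_n, e_{i+1} is the i-th basis vector. *)

Section Grass.
Variable R : realType.
Variable n : nat.

Definition sorted_elts (S : {set 'I_n}) : seq nat :=
  sort leq [seq val i | i <- enum S].
Definition elt (S : {set 'I_n}) (i : nat) : nat := nth 0%N (sorted_elts S) i.

Definition subset_le (S T : {set 'I_n}) : Prop :=
  forall i, (i < #|S|)%N -> (elt S i <= elt T i)%N.
Definition subset_lt (S T : {set 'I_n}) : Prop := subset_le S T /\ S <> T.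

(* Subspaces of R^n are represented by row-space matrices (mxalgebra).
   The column space col(A) of A : 'M_(n,k) is the row space of A^T. *)

Definition projT (T : {set 'I_n}) : 'M[R]_n := diag_mx (\row_i (i \in T)%:R).

(* V \in U_T : the orthogonal projection V -> R^T is an isomorphism *)
Definition in_U (T : {set 'I_n}) m (V : 'M[R]_(m, n)) : Prop :=
  (forall v : 'rV[R]_n, (v <= V)%MS -> v *m projT T = 0 -> v = 0) /\
  (forall w : 'rV[R]_n, (w <= projT T)%MS ->
     exists2 v : 'rV[R]_n, (v <= V)%MS & v *m projT T = w).

Definition in_schubert_cell (k : nat) (S : {set 'I_n}) m (V : 'M[R]_(m, n)) : Prop :=
  [/\ #|S| = k, in_U S V &
      forall T : {set 'I_n}, #|T| = k -> in_U T V -> subset_le T S].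

(* Z_S (0-based: pairs (i,j) with i < k, i <= j < s_i), listed in the
   increasing order: (i,j) < (i',j') iff i < i', or i = i' and j > j'. *)
Definition Zseq (S : {set 'I_n}) : seq (nat * nat) :=
  flatten [seq [seq (i, j) | j <- rev (iota i (elt S i - i))] | i <- iota 0 #|S|].

Definition rotR (j : nat) (theta : R) : 'M[R]_n :=
  \matrix_(a, b)
    (if (val a == j) && (val b == j) then cos theta
     else if (val a == j.+1) && (val b == j.+1) then cos theta
     else if (val a == j.+1) && (val b == j) then sin theta
     else if (val a == j) && (val b == j.+1) then - sin theta
     else (val a == val b)%:R).

Definition idcols (k : nat) : 'M[R]_(n, k) := \matrix_(a, b) (val a == val b)%:R.

(* the matrix (prod_{z in Z_S} R_{z.2}(theta_z)) 1_{n x k}, product left to right *)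
Definition RotMat (S : {set 'I_n}) (theta : nat * nat -> R) : 'M[R]_(n, #|S|) :=
  foldr (fun z M => rotR z.2 (theta z) *m M) 1%:M (Zseq S) *m idcols #|S|.

(* Rot_S(theta) = col(RotMat S theta), as a row-space matrix *)
Definition RotS (S : {set 'I_n}) (theta : nat * nat -> R) : 'M[R]_(#|S|, n) :=
  (RotMat S theta)^T.

End Grass.

From HB Require Import structures.
From mathcomp Require Import all_boot all_order all_algebra.
From mathcomp Require Import reals trigo.
From mathcomp Require Import zify.
Set Implicit Arguments. Unset Strict Implicit. Unset Printing Implicit Defensive.
Import Order.TTheory GRing.Theory Num.Theory.

(* Write V for the row space of RotS S theta and E_r = span(e_c | c < r).
   1. Gale order.  For k-subsets A, B, if #(B ∩ [0,r)) <= #(A ∩ [0,r)) for all r,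
      then A <= B.
   2. Flag bound.  If V ∈ U_T and X ⊆ V ∩ E_r, then dim X <= #(T ∩ [0,r)):
      the projection to R^T is injective on V and maps E_r into R^(T ∩ [0,r)).
   3. Every subspace lies in a Schubert cell: the jump set T_V of
      r |-> dim (V ∩ E_r) satisfies V ∈ U_{T_V}, and by 2 and 1 it dominates
      every T with V ∈ U_T.
   4. Each rotation R_j only mixes coordinates j and j+1.  Following the
      factors of Rot_S column by column, column i of RotS vanishes from row
      s_i + 1 on; and if sin theta_(i,j) = 0 for some (i,j) ∈ Z_S (a boundary
      point), column i even vanishes from row s_i on.  The rotations are
      invertible, so V has dimension k.
   5. Applying 2 to the span of the first i+1 rows of RotS gives T <= S for
      every T with V ∈ U_T, while on the boundary it shows V ∉ U_S.  Hence the
      cell T_V of V from 3 is strictly below S.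
   Only sin theta_z = 0 at a boundary coordinate z is used, not the range
   0 <= theta <= pi. *)

Lemma nth_lt_count (s : seq nat) i r : sorted ltn s -> (i < size s)%N ->
  (nth 0 s i < r)%N = (i < count (fun x => x < r)%N s)%N.
Proof.
elim: s i => [|x s IH] i //= s_sorted i_lt.
have all_gt_x : all (fun y => x < y)%N s := order_path_min ltn_trans s_sorted.
have none_below : (r <= x)%N -> count (fun y => y < r)%N s = 0%N.
  move=> r_le_x; apply/eqP; rewrite eqn0Ngt -has_count; apply/hasPn => y ys.
  by rewrite -leqNgt (leq_trans r_le_x) // ltnW // (allP all_gt_x).
case: i i_lt => [|i] i_lt /=; case: (ltnP x r) => x_r /=.
- by rewrite add1n.
- by rewrite add0n none_below.
- by rewrite IH ?(path_sorted s_sorted) // add1n ltnS.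
- by rewrite IH ?(path_sorted s_sorted) // add0n none_below.
Qed.

Section GaleOrder.
Variable n : nat.
Implicit Types S A B : {set 'I_n}.

Definition count_below S r : nat := count (fun x => x < r)%N (sorted_elts S).

Lemma sorted_elts_ltn S : sorted ltn (sorted_elts S).
Proof.
rewrite ltn_sorted_uniq_leq sort_uniq sort_sorted ?andbT; last exact: leq_total.
by rewrite map_inj_uniq ?enum_uniq //; exact: val_inj.
Qed.

Lemma size_sorted_elts S : size (sorted_elts S) = #|S|.
Proof. by rewrite /sorted_elts size_sort size_map cardE. Qed.

Lemma elt_lt_n S i : (i < #|S|)%N -> (elt S i < n)%N.
Proof.
move=> i_lt; have : elt S i \in sorted_elts S by rewrite mem_nth ?size_sorted_elts.
by rewrite /sorted_elts mem_sort => /mapP [c _ ->]; exact: ltn_ord.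
Qed.

Lemma elt_ltn S i j : (i < j)%N -> (j < #|S|)%N -> (elt S i < elt S j)%N.
Proof.
move=> i_lt_j j_lt; apply: (sorted_ltn_nth ltn_trans); rewrite ?sorted_elts_ltn //.
  by rewrite inE size_sorted_elts (ltn_trans i_lt_j).
by rewrite inE size_sorted_elts.
Qed.

Lemma elt_leq S i j : (i <= j)%N -> (j < #|S|)%N -> (elt S i <= elt S j)%N.
Proof.
rewrite leq_eqVlt => /orP [/eqP -> //| i_lt_j] j_lt.
exact/ltnW/elt_ltn.
Qed.

Lemma elt_ge S i : (i < #|S|)%N -> (i <= elt S i)%N.
Proof.
elim: i => [|i IH] i_lt //.
exact: leq_ltn_trans (IH (ltnW i_lt)) (elt_ltn (ltnSn i) i_lt).
Qed.

Lemma elt_lt_countE S i r : (i < #|S|)%N -> (elt S i < r)%N = (i < count_below S r)%N.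
Proof. by move=> i_lt; rewrite nth_lt_count ?sorted_elts_ltn ?size_sorted_elts. Qed.

Lemma count_below_sum S r : count_below S r = (\sum_(c in S | (c < r)%N) 1)%N.
Proof.
rewrite /count_below /sorted_elts count_sort count_map -sum1_count big_enum_cond.
by apply: eq_bigl => c.
Qed.

Lemma gale_of_count A B : #|A| = #|B| ->
  (forall r, count_below B r <= count_below A r)%N -> subset_le A B.
Proof.
move=> AB dom i i_ltA; have i_ltB : (i < #|B|)%N by rewrite -AB.
have : (i < count_below B (elt B i).+1)%N by rewrite -elt_lt_countE.
by move=> /leq_trans /(_ (dom _)); rewrite -elt_lt_countE // ltnS.
Qed.

End GaleOrder.

Local Open Scope ring_scope.

Section CoordinateSubspaces.
Variables (R : realType) (n : nat).
Implicit Types A B T : {set 'I_n}.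
Notation P := (@projT R n).

Definition flagE r : 'M[R]_n := P [set c : 'I_n | (c < r)%N].

Lemma mul_projT m (X : 'M[R]_(m, n)) A :
  X *m P A = \matrix_(a, c) (if c \in A then X a c else 0).
Proof.
rewrite /projT mul_mx_diag; apply/matrixP => a c; rewrite !mxE.
by case: (c \in A); rewrite ?mulr1 ?mulr0.
Qed.

Lemma projT_mul A B : P A *m P B = P (A :&: B).
Proof.
rewrite mul_projT; apply/matrixP => a c; rewrite !mxE inE.
case: (eqVneq a c) => [->|ac]; last by case: (c \in B); rewrite ?mulr0n.
by case: (c \in B); rewrite ?andbT ?andbF ?mulr0n.
Qed.

Lemma sub_projT_fix m (X : 'M[R]_(m, n)) A : (X <= P A)%MS -> X *m P A = X.
Proof. by move/submxP => [D ->]; rewrite -mulmxA projT_mul setIid. Qed.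

Lemma sub_projTP m (X : 'M[R]_(m, n)) A :
  (X <= P A)%MS <-> (forall a c, c \notin A -> X a c = 0).
Proof.
split=> [/sub_projT_fix XP a c cA | X0].
  by move/matrixP: XP => /(_ a c); rewrite mul_projT mxE (negbTE cA) => <-.
suff -> : X = X *m P A by exact: submxMl.
apply/matrixP => a c; rewrite mul_projT mxE.
by case: ifPn => // cA; rewrite X0.
Qed.

Lemma projT_subset A B : A \subset B -> (P A <= P B)%MS.
Proof. by move=> AB; rewrite -(setIidPl AB) -projT_mul submxMl. Qed.

Lemma row_projT A (c : 'I_n) : row c (P A) = (c \in A)%:R *: delta_mx 0 c.
Proof. by apply/rowP => b; rewrite !mxE eq_sym mulr_natr. Qed.

Lemma rank_projT_le A : (\rank (P A) <= #|A|)%N.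
Proof.
pose Q : 'M[R]_(#|A|, n) := \matrix_(a, c) (enum_val a == c)%:R.
apply: leq_trans (rank_leq_row Q); apply: mxrankS; apply/row_subP => c.
rewrite row_projT; have [cA|] := boolP (c \in A); last by rewrite scale0r sub0mx.
rewrite scale1r (_ : delta_mx 0 c = row (enum_rank_in cA c) Q) ?row_sub //.
by apply/rowP => b; rewrite !mxE enum_rankK_in // eq_sym.
Qed.

Lemma rank_mul_projT m p (V : 'M[R]_(m, n)) (X : 'M[R]_(p, n)) T :
  (forall v : 'rV[R]_n, (v <= V)%MS -> v *m P T = 0 -> v = 0) ->
  (X <= V)%MS -> \rank (X *m P T) = \rank X.
Proof.
move=> inj XV; rewrite -[RHS](mxrank_mul_ker X (P T)).
suff -> : \rank (X :&: kermx (P T)) = 0%N by rewrite addn0.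
apply/eqP; rewrite mxrank_eq0 -submx0; apply/row_subP => i; rewrite submx0.
have v_sub : (row i (X :&: kermx (P T)) <= X :&: kermx (P T))%MS := row_sub _ _.
apply/eqP/inj; first exact: submx_trans (submx_trans v_sub (capmxSl _ _)) XV.
by apply/sub_kermxP; exact: submx_trans v_sub (capmxSr _ _).
Qed.

Lemma rank_flag_le m p (V : 'M[R]_(m, n)) (X : 'M[R]_(p, n)) T r :
  in_U T V -> (X <= V)%MS -> (X <= flagE r)%MS -> (\rank X <= count_below T r)%N.
Proof.
move=> [inj _] XV XE; rewrite -(rank_mul_projT inj XV) -(sub_projT_fix XE).
rewrite -mulmxA projT_mul (leq_trans (mxrankM_maxr _ _)) //.
rewrite (leq_trans (rank_projT_le _)) // count_below_sum -sum1_card.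
by apply: eq_leq; apply: eq_bigl => c; rewrite !inE andbC.
Qed.

End CoordinateSubspaces.

Section JumpSet.
Variables (R : realType) (n m : nat) (V : 'M[R]_(m, n)).
Notation P := (@projT R n).
Notation E := (@flagE R n).

Definition flagdim r : nat := \rank (V :&: E r).

Lemma flagE_succ r : (E r <= E r.+1)%MS.
Proof. by apply: projT_subset; apply/subsetP => c; rewrite !inE => /ltnW. Qed.

Lemma flagdim_succ r : (flagdim r <= flagdim r.+1)%N.
Proof. exact/mxrankS/capmxS/flagE_succ. Qed.

(* d grows by at most one: E_{r+1} = E_r + R e_r. *)
Lemma flagdim_step r : (flagdim r.+1 <= (flagdim r).+1)%N.
Proof.
pose e_r : 'rV[R]_n := \row_c (val c == r)%:R.
have E_succ : (E r.+1 <= E r + e_r)%MS.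
  apply/row_subP => c; rewrite row_projT inE; case: (ltngtP c r) => cr.
  - rewrite ltnS (ltnW cr) scale1r; apply: submx_trans (addsmxSl _ _).
    have -> : delta_mx 0 c = row c (E r) by rewrite row_projT inE cr scale1r.
    exact: row_sub.
  - by rewrite ltnNge cr scale0r sub0mx.
  - rewrite cr ltnSn scale1r (_ : delta_mx 0 c = e_r) ?addsmxSr //.
    by apply/rowP => b; rewrite !mxE eqxx -cr.
have sum_le : (\rank (V :&: E r.+1 + E r) <= \rank (E r + e_r))%N.
  apply: mxrankS; rewrite addsmx_sub addsmxSl andbT.
  exact: submx_trans (capmxSr _ _) E_succ.
have cap_le : (\rank (V :&: E r.+1 :&: E r) <= flagdim r)%N.
  apply: mxrankS; rewrite sub_capmx capmxSr andbT.
  exact: submx_trans (capmxSl _ _) (capmxSl _ _).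
have := mxrank_sum_cap (V :&: E r.+1)%MS (E r).
have := (mxrank_adds_leqif (E r) e_r).1; have := rank_leq_row e_r.
move: sum_le cap_le; rewrite /flagdim; lia.
Qed.

Lemma flagdim0 : flagdim 0 = 0%N.
Proof.
rewrite /flagdim; suff -> : E 0 = 0 by rewrite capmx0 mxrank0.
by apply/matrixP => a c; rewrite !mxE inE ltn0 mul0rn.
Qed.

Lemma flagdim_full r : (n <= r)%N -> flagdim r = \rank V.
Proof.
move=> nr; apply/eqmx_rank/eqmxP/capmx_idPl/sub_projTP => a c.
by rewrite inE (leq_trans (ltn_ord c) nr).
Qed.

Definition jumps : {set 'I_n} := [set r : 'I_n | (flagdim r < flagdim r.+1)%N].

(* #(T_V ∩ [0,r)) = d r, since d increases exactly at the jumps. *)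
Lemma count_below_jumps r : (r <= n)%N -> count_below jumps r = flagdim r.
Proof.
move=> rn; rewrite count_below_sum big_mkcondl /=.
rewrite (eq_bigr (fun c : 'I_n => (flagdim c < flagdim c.+1)%N : nat)); last first.
  by move=> c _; rewrite inE; case: ifP.
rewrite -(@big_ord_widen_cond _ 0%N addn r n xpredT
  (fun c => (flagdim c < flagdim c.+1)%N : nat) rn).
elim: r rn => [|r IH] rn; first by rewrite big_ord0 flagdim0.
rewrite big_ord_recr /= IH ?(ltnW rn) //.
by have := flagdim_succ r; have := flagdim_step r; case: ltnP => /=; lia.
Qed.

Lemma card_jumps : #|jumps| = \rank V.
Proof.
rewrite -(flagdim_full (leqnn n)) -count_below_jumps // count_below_sum -sum1_card.
by apply: eq_bigl => c; rewrite ltn_ord andbT.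
Qed.

(* A vector of V ∩ E_r vanishing on T_V is zero: look at its last nonzero
   coordinate c < r, which must be a jump of d. *)
Lemma jumps_inj r (v : 'rV[R]_n) : (r <= n)%N ->
  (v <= V)%MS -> (v <= E r)%MS -> v *m P jumps = 0 -> v = 0.
Proof.
elim: r v => [|r IH] v rn vV vE vT.
  by apply/rowP => c; rewrite mxE; move/sub_projTP: vE; apply; rewrite inE.
pose c0 : 'I_n := Ordinal rn.
have [vc0|vc0] := eqVneq (v 0 c0) 0.
  apply: IH (ltnW rn) vV _ vT; apply/sub_projTP => a c; rewrite inE -leqNgt => rc.
  rewrite (ord1 a); have [->//|cc0] := eqVneq c c0.
  move/sub_projTP: vE; apply; rewrite inE -leqNgt ltn_neqAle rc andbT.
  by apply: contra cc0 => /eqP cr; apply/eqP/val_inj.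
have c0_jump : c0 \in jumps.
  have VE : (V :&: E r <= V :&: E r.+1)%MS by apply: capmxS (flagE_succ r).
  rewrite inE /flagdim ltn_neqAle (mxrank_leqif_sup VE).1 andbT (mxrank_leqif_sup VE).2.
  apply: contra vc0 => VE'.
  have : (v <= E r)%MS.
    by rewrite (submx_trans _ (capmxSr V _)) // (submx_trans _ VE') // sub_capmx vV.
  by move/sub_projTP/(_ 0 c0); rewrite inE ltnn => ->.
move/rowP: vT => /(_ c0); rewrite mul_projT !mxE c0_jump => v_c0.
by rewrite v_c0 eqxx in vc0.
Qed.

(* V ∈ U_{T_V}: the projection to R^{T_V} is injective on V, and onto since
   dim V = #|T_V|. *)
Lemma in_U_jumps : in_U jumps V.
Proof.
have inj (v : 'rV[R]_n) : (v <= V)%MS -> v *m P jumps = 0 -> v = 0.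
  move=> vV; apply: (jumps_inj (leqnn n)) => //.
  by apply/sub_projTP => a c; rewrite inE ltn_ord.
split=> // w wT.
have VP_full : (P jumps <= V *m P jumps)%MS.
  rewrite -(mxrank_leqif_sup (submxMl V (P jumps))).2 eqn_leq mxrankS ?submxMl //=.
  by rewrite (rank_mul_projT inj (submx_refl V)) -card_jumps rank_projT_le.
have /submxP [D ->] := submx_trans wT VP_full.
by exists (D *m V); rewrite ?submxMl ?mulmxA.
Qed.

Lemma count_below_jumps_le T : in_U T V ->
  forall r, (count_below jumps r <= count_below T r)%N.
Proof.
move=> VT r; have [rn|nr] := leqP r n.
  by rewrite count_below_jumps // (rank_flag_le VT (capmxSl _ _) (capmxSr _ _)).
apply: leq_trans (_ : \rank V <= _)%N.
  by rewrite -card_jumps -size_sorted_elts count_size.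
apply: rank_flag_le VT (submx_refl _) _; apply/sub_projTP => a c; rewrite inE.
by rewrite (ltn_trans (ltn_ord c) nr).
Qed.

End JumpSet.

Lemma schubert_cell_exists (R : realType) n m (V : 'M[R]_(m, n)) k : \rank V = k ->
  exists T : {set 'I_n}, in_schubert_cell k T V.
Proof.
move=> rankV; exists (jumps V); split; [by rewrite card_jumps | exact: in_U_jumps |].
move=> T cardT VT; apply: gale_of_count; first by rewrite cardT card_jumps.
exact: count_below_jumps_le.
Qed.

Section Rotations.
Variables (R : realType) (n : nat).
Notation rot := (@rotR R n).

Lemma rotR_id_entry j t a (c : 'I_n) :
  (val c != j) -> (val c != j.+1) -> rot j t a c = (a == c)%:R.
Proof. by move=> /negbTE cj /negbTE cj1; rewrite mxE cj cj1 !andbF. Qed.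

Lemma rotR_mulE j (jn : (j.+1 < n)%N) t p (X : 'M[R]_(n, p)) a i :
  let j0 := Ordinal (ltnW jn) in let j1 := Ordinal jn in
  (rot j t *m X) a i =
  if val a == j then cos t * X j0 i - sin t * X j1 i
  else if val a == j.+1 then sin t * X j0 i + cos t * X j1 i else X a i.
Proof.
move=> j0 j1; have j01 : j0 != j1 by rewrite -val_eqE /= neq_ltn ltnSn.
rewrite mxE (bigD1 j0) // (bigD1 j1) /=; last by rewrite eq_sym.
have rest : \sum_(c | (c != j0) && (c != j1)) rot j t a c * X c i =
    ((val a != j) && (val a != j.+1))%:R * X a i.
  rewrite (eq_bigr (fun c => (a == c)%:R * X c i)); last first.
    by move=> c /andP [cj0 cj1]; rewrite rotR_id_entry.
  have [aj|aj] := boolP ((val a != j) && (val a != j.+1)).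
    rewrite (bigD1 a) //= eqxx !mul1r big1 ?addr0 // => c /andP [_ ca].
    by rewrite eq_sym (negbTE ca) mul0r.
  rewrite mul0r big1 // => c cj; case: (eqVneq a c) => [ac|]; last by rewrite mul0r.
  by rewrite ac cj in aj.
have jj1 : (j == j.+1) = false by elim: j {jn j0 j1 j01 rest}.
have jj1' : (j.+1 == j) = false by rewrite eq_sym.
rewrite rest !mxE /= eqxx.
case: (eqVneq (nat_of_ord a) j) => [aj|aj] /=.
  by rewrite aj eqxx jj1 jj1' /= mul0r addr0 mulNr.
case: (eqVneq (nat_of_ord a) j.+1) => [aj1|aj1] /=.
  by rewrite jj1 eqxx mul0r addr0.
by rewrite !(mul0r, mul1r, add0r).
Qed.

Lemma rotR_mulN j (jn : (j.+1 < n)%N) t : rot j t *m rot j (- t) = 1%:M.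
Proof.
apply/matrixP => a b; rewrite rotR_mulE !mxE /= cosN sinN.
have jj1 : (j == j.+1) = false by elim: j {jn}.
have jj1' : (j.+1 == j) = false by rewrite eq_sym.
rewrite [a == b]/eq_op /=.
case: (eqVneq (nat_of_ord a) j) => a0; case: (eqVneq (nat_of_ord a) j.+1) => a1;
case: (eqVneq (val b) j) => b0; case: (eqVneq (val b) j.+1) => b1;
rewrite ?a0 ?a1 ?b0 ?b1 ?eqxx ?jj1 ?jj1' /=; try (exfalso; lia); try by [].
- by rewrite mulrN opprK -!expr2 cos2Dsin2.
- by rewrite opprK mulrC subrr.
- by rewrite eq_sym (negbTE b0) !mulr0 subr0.
- by rewrite mulrN mulrC subrr.
- by rewrite opprK -!expr2 addrC cos2Dsin2.
- by rewrite eq_sym (negbTE b1) !mulr0 addr0.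
Qed.

Lemma rotR_unit j (jn : (j.+1 < n)%N) t : rot j t \in unitmx.
Proof. by case: (mulmx1_unit (rotR_mulN jn t)). Qed.

Definition vanish_from p (X : 'M[R]_(n, p)) (i : 'I_p) (r : nat) : Prop :=
  forall a : 'I_n, (r <= a)%N -> X a i = 0.

Lemma vanish_from_le p (X : 'M[R]_(n, p)) i b r :
  (b <= r)%N -> vanish_from X i b -> vanish_from X i r.
Proof. by move=> br X0 a ra; apply: X0; exact: leq_trans ra. Qed.

Lemma rotR_vanish j (jn : (j.+1 < n)%N) t p (X : 'M[R]_(n, p)) i b :
  vanish_from X i b -> [|| (j.+1 < b)%N, (b <= j)%N | (j.+1 == b) && (sin t == 0)] ->
  vanish_from (rot j t *m X) i b.
Proof.
move=> X0 cond a ba; rewrite rotR_mulE.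
case: (eqVneq (nat_of_ord a) j) => [aj|_].
  have bj : (b <= j)%N by rewrite -aj.
  by rewrite !X0 ?mulr0 ?subr0 //= (leqW bj).
case: (eqVneq (nat_of_ord a) j.+1) => [aj1|_]; last exact: X0.
have bj1 : (b <= j.+1)%N by rewrite -aj1.
rewrite (X0 (Ordinal jn)) // mulr0 addr0.
case/or3P: cond => [jb|bj|/andP [_ /eqP ->]]; last by rewrite mul0r.
  by rewrite ltnNge bj1 in jb.
by rewrite X0 ?mulr0.
Qed.

End Rotations.

Lemma tr_idcols_mul (R : realType) p q : (q <= p)%N ->
  (idcols R p q)^T *m idcols R p q = 1%:M.
Proof.
move=> qp; apply/matrixP => a a'; rewrite !mxE (bigD1 (widen_ord qp a)) //= big1.
  by rewrite !mxE /= eqxx mul1r addr0.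
move=> b ba; rewrite !mxE; case: (eqVneq (val b) (val a)) => [e|]; last by rewrite mul0r.
by move: ba; rewrite -val_eqE /= e eqxx.
Qed.

Lemma rank_tr_idcols (R : realType) p q : (q <= p)%N -> \rank (idcols R p q)^T = q.
Proof.
move=> qp; apply/eqP; rewrite eqn_leq rank_leq_row /=.
by rewrite -{1}(mxrank1 R q) -(tr_idcols_mul R qp) mxrankM_maxl.
Qed.

Section RotationMatrix.
Variables (R : realType) (n : nat) (S : {set 'I_n}) (theta : nat * nat -> R).
Notation k := #|S|.
Notation s := (elt S).

Definition zblock i : seq (nat * nat) := [seq (i, j) | j <- rev (iota i (s i - i))].

Lemma Zseq_zblocks : Zseq S = flatten [seq zblock i | i <- iota 0 k].
Proof. by []. Qed.

Lemma mem_zblocks l z : (forall i, i \in l -> (i < k)%N) ->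
  z \in flatten [seq zblock i | i <- l] -> [/\ z.1 \in l, (z.1 <= z.2)%N & (z.2 < s z.1)%N].
Proof.
move=> l_lt /flattenP [x /mapP [i il ->]] /mapP [j].
by rewrite mem_rev mem_iota subnKC ?elt_ge ?l_lt // => /andP [ij js] ->.
Qed.

Lemma mem_Zseq z : z \in Zseq S -> [/\ (z.1 < k)%N, (z.1 <= z.2)%N & (z.2 < s z.1)%N].
Proof.
have iota_lt i : i \in iota 0 k -> (i < k)%N by rewrite mem_iota.
by rewrite Zseq_zblocks => /(mem_zblocks iota_lt) [/iota_lt].
Qed.

Lemma Zseq_rot_index z : z \in Zseq S -> (z.2.+1 < n)%N.
Proof. by case/mem_Zseq => zk _ /leq_ltn_trans; apply; exact: elt_lt_n. Qed.

Lemma Zseq_split i : (i < k)%N -> Zseq S =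
  flatten [seq zblock i' | i' <- iota 0 i] ++ zblock i ++
  flatten [seq zblock i' | i' <- iota i.+1 (k - i.+1)].
Proof.
move=> ik; rewrite Zseq_zblocks; have -> : iota 0 k = iota 0 i ++ i :: iota i.+1 (k - i.+1).
  by rewrite -{1}(subnKC (ltnW ik)) iotaD add0n -(subnSK ik).
by rewrite map_cat flatten_cat.
Qed.

Definition rotate (L : seq (nat * nat)) p (X : 'M[R]_(n, p)) : 'M[R]_(n, p) :=
  foldr (fun z Y => @rotR R n z.2 (theta z) *m Y) X L.

Lemma rotate_cat L1 L2 p (X : 'M[R]_(n, p)) :
  rotate (L1 ++ L2) X = rotate L1 (rotate L2 X).
Proof. exact: foldr_cat. Qed.

Lemma rotprod_mul L p (X : 'M[R]_(n, p)) :
  foldr (fun z M => @rotR R n z.2 (theta z) *m M) 1%:M L *m X = rotate L X.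
Proof. by elim: L => [|z L IH] /=; rewrite ?mul1mx // -mulmxA IH. Qed.

Lemma rotprod_unit L : (forall z, z \in L -> (z.2.+1 < n)%N) ->
  foldr (fun z M => @rotR R n z.2 (theta z) *m M) 1%:M L \in unitmx.
Proof.
elim: L => [|z L IH] L_n /=; first exact: unitmx1.
rewrite unitmx_mul rotR_unit ?L_n ?mem_head //=.
by apply: IH => z' z'L; rewrite L_n // in_cons z'L orbT.
Qed.

Lemma rotate_vanish L p (X : 'M[R]_(n, p)) i b :
  (forall z, z \in L -> (z.2.+1 < n)%N) ->
  (forall z, z \in L ->
     [|| (z.2.+1 < b)%N, (b <= z.2)%N | (z.2.+1 == b) && (sin (theta z) == 0)]) ->
  vanish_from X i b -> vanish_from (rotate L X) i b.
Proof.
move=> L_n L_cond X0; elim: L L_n L_cond => [|z L IH] L_n L_cond //=.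
apply: rotR_vanish; rewrite ?L_n ?L_cond ?mem_head //.
by apply: IH => z' z'L; [apply: L_n | apply: L_cond]; rewrite in_cons z'L orbT.
Qed.

(* Column i of Rot_S is e_i pushed through the rows i' <= i of Z_S (rows
   below i never touch coordinate i). *)
Lemma RotMat_vanish (i : 'I_k) b r : (i < b)%N -> (b <= r)%N ->
  (forall j, (i <= j < s i)%N ->
     [|| (j.+1 < b)%N, (b <= j)%N | (j.+1 == b) && (sin (theta (val i, j)) == 0)]) ->
  (forall i', (i' < i)%N -> (s i' < r)%N) ->
  vanish_from (RotMat S theta) i r.
Proof.
move=> ib br row_i rows_above.
have in_Z z : z \in flatten [seq zblock i' | i' <- iota 0 i] ++ zblock i ++
    flatten [seq zblock i' | i' <- iota i.+1 (k - i.+1)] -> (z.2.+1 < n)%N.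
  by rewrite -Zseq_split //; exact: Zseq_rot_index.
have above_lt i' : i' \in iota 0 i -> (i' < k)%N.
  by rewrite mem_iota add0n => /andP [_ /ltn_trans]; apply.
have below_lt i' : i' \in iota i.+1 (k - i.+1) -> (i' < k)%N.
  by rewrite mem_iota subnKC // => /andP [_].
rewrite /RotMat rotprod_mul (Zseq_split (ltn_ord i)) !rotate_cat.
apply: rotate_vanish => [z zL|z /(mem_zblocks above_lt) [z_i _ z_s]|].
- by apply: in_Z; rewrite mem_cat zL.
- move: z_i; rewrite mem_iota add0n => /andP [_ /rows_above z_r].
  by rewrite (leq_ltn_trans z_s z_r).
apply: vanish_from_le br _; apply: rotate_vanish => [z zL|z /mapP [j]|].
- by apply: in_Z; rewrite mem_cat orbC mem_cat zL.
- by rewrite mem_rev mem_iota subnKC ?elt_ge // => j_i ->; exact: row_i.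
apply: vanish_from_le ib _.
apply: rotate_vanish => [z zL|z /(mem_zblocks below_lt) [z_i z_iz _]|].
- by apply: in_Z; rewrite !mem_cat zL !orbT.
- by move: z_i; rewrite mem_iota => /andP [iz _]; rewrite orbC (leq_trans iz z_iz).
by move=> a ia; rewrite mxE (_ : (val a == val i) = false) // gtn_eqF.
Qed.

Lemma RotMat_vanish_interior (i : 'I_k) : vanish_from (RotMat S theta) i (s i).+1.
Proof.
apply: (@RotMat_vanish i (s i).+1) => // [|j /andP [_ js]|i' i'i].
- by rewrite ltnS elt_ge.
- by rewrite ltnS js.
- by rewrite ltnS elt_leq // ltnW.
Qed.

Lemma RotMat_vanish_boundary (i : 'I_k) j : (i <= j < s i)%N ->
  sin (theta (val i, j)) = 0 -> vanish_from (RotMat S theta) i (s i).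
Proof.
move=> /andP [ij js] sin0; apply: (@RotMat_vanish i j.+1) => // [j' _|i' i'i].
  case: (ltngtP j' j) => [j'j|jj'|->]; first by rewrite ltnS j'j.
    by rewrite orbT.
  by rewrite sin0 !eqxx !orbT.
exact: elt_ltn i'i (ltn_ord i).
Qed.

End RotationMatrix.

Section RotationSubspace.
Variables (R : realType) (n : nat) (S : {set 'I_n}) (theta : nat * nat -> R).
Notation k := #|S|.
Notation s := (elt S).
Notation V := (RotS S theta).

(* Rot_S(theta) has dimension k: an invertible matrix applied to k
   independent columns. *)
Lemma rank_RotS : \rank V = k.
Proof.
have kn : (k <= n)%N by rewrite -[X in (_ <= X)%N](card_ord n) max_card.
rewrite /RotS /RotMat trmx_mul mxrankMfree ?rank_tr_idcols //.
rewrite row_free_unit unitmx_tr rotprod_unit //; exact: Zseq_rot_index.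
Qed.

Definition first_rows i : 'M[R]_(i.+1, n) := (idcols R k i.+1)^T *m V.

Lemma rank_first_rows i : (i < k)%N -> \rank (first_rows i) = i.+1.
Proof. by move=> ik; rewrite mxrankMfree ?rank_tr_idcols // /row_free rank_RotS. Qed.

Lemma first_rows_sub_flag i r :
  (forall b : 'I_k, (b <= i)%N -> vanish_from (RotMat S theta) b r) ->
  (first_rows i <= flagE R n r)%MS.
Proof.
move=> cols0; apply/sub_projTP => a c; rewrite inE -leqNgt => rc.
rewrite mxE big1 // => b _.
have -> : (idcols R k i.+1)^T a b = (val b == val a)%:R by rewrite !mxE.
have -> : V b c = RotMat S theta c b by rewrite mxE.
have [ba|] := eqVneq (val b) (val a); last by rewrite mul0r.
rewrite cols0 ?mulr0 // -ltnS; have : (val a < i.+1)%N := ltn_ord a.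
by rewrite -ba.
Qed.

Lemma first_rows_count_below (T : {set 'I_n}) i r : (i < k)%N -> in_U T V ->
  (forall b : 'I_k, (b <= i)%N -> vanish_from (RotMat S theta) b r) ->
  (i < count_below T r)%N.
Proof.
move=> ik VT cols0; rewrite -(rank_first_rows ik).
exact: rank_flag_le VT (submxMl _ _) (first_rows_sub_flag cols0).
Qed.

Lemma RotS_U_le (T : {set 'I_n}) : #|T| = k -> in_U T V -> subset_le T S.
Proof.
move=> cardT VT i iT; have ik : (i < k)%N by rewrite -cardT.
rewrite -ltnS elt_lt_countE //; apply: first_rows_count_below VT _ => // b bi.
apply: (vanish_from_le _ (@RotMat_vanish_interior R n S theta b)).
by rewrite ltnS elt_leq.
Qed.

Lemma RotS_boundary_not_in_U z : z \in Zseq S -> sin (theta z) = 0 -> ~ in_U S V.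
Proof.
case: z => i j /mem_Zseq [/= ik ij js] sin0 VS.
suff cols0 : forall b : 'I_k, (b <= i)%N -> vanish_from (RotMat S theta) b (s i).
  by have := first_rows_count_below ik VS cols0; rewrite -elt_lt_countE // ltnn.
move=> b; rewrite leq_eqVlt => /orP [/eqP bi|bi].
  have -> : b = Ordinal ik by exact: val_inj.
  by apply: (RotMat_vanish_boundary (i := Ordinal ik) (j := j)); rewrite ?ij.
exact: vanish_from_le (elt_ltn bi ik) (@RotMat_vanish_interior R n S theta b).
Qed.

End RotationSubspace.

Theorem lemma2p11 (R : realType) (n k : nat) (S : {set 'I_n}) :
  (1 <= k)%N -> (k <= n)%N -> #|S| = k ->
  forall theta : nat * nat -> R,
    (forall z, z \in Zseq S -> 0 <= theta z <= pi) ->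
    (exists2 z, z \in Zseq S & theta z = 0 \/ theta z = pi) ->
    exists T : {set 'I_n},
      subset_lt T S /\ in_schubert_cell k T (RotS S theta).
Proof.
move=> _ _ <- theta _ [z z_in z_boundary].
have sin0 : sin (theta z) = 0 by case: z_boundary => ->; rewrite ?sin0 ?sinpi.
have [T [cardT VT T_max]] := schubert_cell_exists (rank_RotS S theta).
exists T; split; last by split.
split; first exact: RotS_U_le cardT VT.
by move=> TS; rewrite TS in VT; exact: RotS_boundary_not_in_U z_in sin0 VT.
Qed.
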